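(* Let $(X,d)$ be a compact metric space and let $f\in\mathcal{H}(X)$ be equicontinuous. If $f$ has the strict periodic shadowing property, then $f$ is topologically stable and $\dim X=0$.
   Context: $\mathcal{H}(X)$ is the set of homeomorphisms; $d_{C^0}(f,g)=\sup_x d(f(x),g(x))$; $D(f,g)=\max\{d_{C^0}(f,g),d_{C^0}(f^{-1},g^{-1})\}$. $f$ is equicontinuous if for every $\epsilon>0$ there is $\delta>0$ such that $d(x,y)\le\delta$ implies $\sup_{i\in\mathbb{Z}}d(f^i(x),f^i(y))\le\epsilon$. A $\delta$-cycle is a sequence $(x_i)_{i=0}^m$, $m\ge1$, with $d(f(x_i),x_{i+1})\le\delta$ for $0\le i<m$ and $x_0=x_m$. $f$ has the strict periodic shadowing property if for every $\epsilon>0$ there is $\delta>0$ such that for every $\delta$-cycle $(x_i)_{i=0}^m$ there is $p$ with $f^m(p)=p$ and $d(x_i,f^i(p))\le\epsilon$ for $0\le i\le m$. $f$ is topologically stable if for every $\epsilon>0$ there is $\delta>0$ such that for every $g\in\mathcal{H}(X)$ with $D(f,g)<\delta$ there is a continuous $h:X\to X$ with $d_{C^0}(h,\mathrm{id}_X)<\epsilon$ and $h\circ g=f\circ h$. *)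

From Stdlib Require Import Reals List ZArith.
Open Scope R_scope.

Set Implicit Arguments.

Definition is_metric (X : Type) (d : X -> X -> R) : Prop :=
  (forall x y, 0 <= d x y) /\
  (forall x y, d x y = 0 <-> x = y) /\
  (forall x y, d x y = d y x) /\
  (forall x y z, d x z <= d x y + d y z).

Definition is_open (X : Type) (d : X -> X -> R) (U : X -> Prop) : Prop :=
  forall x, U x -> exists r, 0 < r /\ forall y, d x y < r -> U y.

Definition is_compact (X : Type) (d : X -> X -> R) : Prop :=
  forall (I : Type) (U : I -> X -> Prop),
    (forall i, is_open d (U i)) ->
    (forall x, exists i, U i x) ->
    exists l : list I, forall x, exists i, In i l /\ U i x.

Definition continuous_map (X : Type) (d : X -> X -> R) (h : X -> X) : Prop :=
  forall x eps, 0 < eps -> exists delta, 0 < delta /\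
    forall y, d x y < delta -> d (h x) (h y) < eps.

Record homeo (X : Type) (d : X -> X -> R) := Homeo {
  hmap : X -> X;
  hinv : X -> X;
  hinv_l : forall x, hinv (hmap x) = x;
  hinv_r : forall x, hmap (hinv x) = x;
  hmap_cont : continuous_map d hmap;
  hinv_cont : continuous_map d hinv
}.

Definition ziter (X : Type) (d : X -> X -> R) (f : homeo d) (i : Z) : X -> X :=
  match i with
  | Z0 => fun x => x
  | Zpos p => Nat.iter (Pos.to_nat p) (hmap f)
  | Zneg p => Nat.iter (Pos.to_nat p) (hinv f)
  end.

Definition is_dC0 (X : Type) (d : X -> X -> R) (u v : X -> X) (s : R) : Prop :=
  is_lub (fun r => exists x, r = d (u x) (v x)) s.

Definition dC0_lt (X : Type) (d : X -> X -> R) (u v : X -> X) (eps : R) : Prop :=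
  exists s, is_dC0 d u v s /\ s < eps.

Definition Dhomeo_lt (X : Type) (d : X -> X -> R) (f g : homeo d) (delta : R) : Prop :=
  exists s1 s2, is_dC0 d (hmap f) (hmap g) s1 /\
                is_dC0 d (hinv f) (hinv g) s2 /\ Rmax s1 s2 < delta.

Definition equicontinuous (X : Type) (d : X -> X -> R) (f : homeo d) : Prop :=
  forall eps, 0 < eps -> exists delta, 0 < delta /\
    forall x y, d x y <= delta -> forall i : Z, d (ziter f i x) (ziter f i y) <= eps.

Definition is_delta_cycle (X : Type) (d : X -> X -> R) (f : homeo d) (delta : R)
  (x : nat -> X) (m : nat) : Prop :=
  (1 <= m)%nat /\
  (forall i, (i < m)%nat -> d (hmap f (x i)) (x (S i)) <= delta) /\
  x 0%nat = x m.

Definition strict_periodic_shadowing (X : Type) (d : X -> X -> R) (f : homeo d) : Prop :=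
  forall eps, 0 < eps -> exists delta, 0 < delta /\
    forall (x : nat -> X) (m : nat), is_delta_cycle f delta x m ->
      exists p, Nat.iter m (hmap f) p = p /\
        forall i, (i <= m)%nat -> d (x i) (Nat.iter i (hmap f) p) <= eps.

Definition topologically_stable (X : Type) (d : X -> X -> R) (f : homeo d) : Prop :=
  forall eps, 0 < eps -> exists delta, 0 < delta /\
    forall g : homeo d, Dhomeo_lt f g delta ->
      exists h : X -> X, continuous_map d h /\ dC0_lt d h (fun x => x) eps /\
        forall x, h (hmap g x) = hmap f (h x).

(** Lebesgue covering dimension <= 0: every finite open cover has a finite open
    refinement consisting of pairwise disjoint sets (order <= 0). *)
Definition covering_dim_le0 (X : Type) (d : X -> X -> R) : Prop :=
  forall cover : list (X -> Prop),
    (forall U, In U cover -> is_open d U) ->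
    (forall x, exists U, In U cover /\ U x) ->
    exists refn : list (X -> Prop),
      (forall V, In V refn -> is_open d V) /\
      (forall x, exists V, In V refn /\ V x) /\
      (forall V, In V refn -> exists U, In U cover /\ forall x, V x -> U x) /\
      (forall i j x, (i < length refn)%nat -> (j < length refn)%nat -> i <> j ->
         nth i refn (fun _ => False) x -> nth j refn (fun _ => False) x -> False).

(** dim X = 0: dim X <= 0 and X nonempty (dim X = -1 iff X is empty). *)
Definition dim_eq0 (X : Type) (d : X -> X -> R) : Prop :=
  covering_dim_le0 d /\ inhabited X.

(* Fix r > 0 and relate x and y when they are joined by a finite chain of points whose
   whole orbits stay pairwise r-close.  By equicontinuity the classes of this equivalence
   are open, hence finitely many; f permutes them, and every point is recurrent, so every
   class is periodic.  Strict periodic shadowing of the pseudo-cycle that runs along a chain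
   from x to y, back again, and then returns to x by recurrence forces d(x, y) to be small
   when r is small.  So X has arbitrarily fine partitions into clopen sets, i.e. dim X = 0.
   If g is close to f, then g y lies in the class of f y; sending the i-th class of a cycle
   of classes to f^i q, where q is a periodic point shadowing that cycle, defines a map h
   that is constant on classes, close to the identity, and satisfies h o g = f o h. *)

From Stdlib Require Import Reals List ZArith Lra Lia Relations Setoid Permutation RList.
From Stdlib Require Import Classical ClassicalEpsilon PropExtensionality FunctionalExtensionality.
Open Scope R_scope.
Set Implicit Arguments.
Unset Strict Implicit.

Lemma ex_least_nat (P : nat -> Prop) :
  (exists n, P n) -> exists n, P n /\ forall i, (i < n)%nat -> ~ P i.
Proof.
  intros Hex.
  destruct (dec_inh_nat_subset_has_unique_least_element P (fun n => classic (P n)) Hex)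
    as (n & (Hn & Hleast) & _).
  exists n. split; [exact Hn|].
  intros i Hi HPi. specialize (Hleast i HPi). lia.
Qed.

Section Disjointify.
Variable X : Type.

Definition disjoint_piece (Cs : list (X -> Prop)) (j : nat) (x : X) : Prop :=
  nth j Cs (fun _ => False) x /\ forall i, (i < j)%nat -> ~ nth i Cs (fun _ => False) x.

Definition disjointify (Cs : list (X -> Prop)) : list (X -> Prop) :=
  map (disjoint_piece Cs) (seq 0 (length Cs)).

Lemma in_disjointify Cs V :
  In V (disjointify Cs) <-> exists j, (j < length Cs)%nat /\ V = disjoint_piece Cs j.
Proof.
  unfold disjointify. rewrite in_map_iff. split.
  - intros (j & <- & Hj). apply in_seq in Hj. exists j. split; [lia|reflexivity].
  - intros (j & Hj & ->). exists j. split; [reflexivity|]. apply in_seq. lia.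
Qed.

Lemma nth_disjointify Cs j : (j < length Cs)%nat ->
  nth j (disjointify Cs) (fun _ => False) = disjoint_piece Cs j.
Proof.
  intros Hj. unfold disjointify.
  rewrite (nth_indep _ _ (disjoint_piece Cs 0)) by (rewrite length_map, length_seq; exact Hj).
  rewrite map_nth, seq_nth by exact Hj. reflexivity.
Qed.

Lemma disjointify_cover Cs :
  (forall x, exists C, In C Cs /\ C x) -> forall x, exists V, In V (disjointify Cs) /\ V x.
Proof.
  intros Hcov x. destruct (Hcov x) as (C & HC & Cx).
  destruct (In_nth Cs C (fun _ => False) HC) as (n & Hn & HnC).
  destruct (ex_least_nat (P := fun j => nth j Cs (fun _ => False) x)) as (j & Hj & Hleast).
  { exists n. rewrite HnC. exact Cx. }
  assert (Hjn : (j <= n)%nat).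
  { destruct (Nat.le_gt_cases j n) as [|Hlt]; [assumption|].
    exfalso. apply (Hleast n Hlt). rewrite HnC. exact Cx. }
  exists (disjoint_piece Cs j). split.
  - apply in_disjointify. exists j. split; [lia|reflexivity].
  - split; assumption.
Qed.

Lemma disjointify_refines Cs V :
  In V (disjointify Cs) -> exists C, In C Cs /\ forall x, V x -> C x.
Proof.
  intros HV. apply in_disjointify in HV as (j & Hj & ->).
  exists (nth j Cs (fun _ => False)). split; [apply nth_In; exact Hj|].
  intros x [Hx _]. exact Hx.
Qed.

Lemma disjointify_disjoint Cs i j x :
  (i < length (disjointify Cs))%nat -> (j < length (disjointify Cs))%nat -> i <> j ->
  nth i (disjointify Cs) (fun _ => False) x -> nth j (disjointify Cs) (fun _ => False) x -> False.
Proof.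
  unfold disjointify at 1 2. rewrite length_map, length_seq.
  intros Hi Hj Hij. rewrite !nth_disjointify by assumption.
  intros [Hxi Hbefore_i] [Hxj Hbefore_j].
  destruct (Nat.lt_total i j) as [Hlt|[Heq|Hlt]].
  - exact (Hbefore_j i Hlt Hxi).
  - exact (Hij Heq).
  - exact (Hbefore_i j Hlt Hxj).
Qed.

End Disjointify.

Lemma dC0_lt_of_bound (X : Type) (d : X -> X -> R) (u v : X -> X) (b eps : R) :
  inhabited X -> (forall x, d (u x) (v x) <= b) -> b < eps -> dC0_lt d u v eps.
Proof.
  intros [x0] Hb Hlt.
  destruct (completeness (fun s => exists x, s = d (u x) (v x))) as [s Hs].
  - exists b. intros s [x ->]. apply Hb.
  - exists (d (u x0) (v x0)), x0. reflexivity.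
  - exists s. split; [exact Hs|].
    assert (s <= b) by (apply Hs; intros t [x ->]; apply Hb). lra.
Qed.

Section Metric.
Variables (X : Type) (d : X -> X -> R).
Hypothesis Hm : is_metric d.

Lemma dist_nonneg x y : 0 <= d x y.
Proof. apply Hm. Qed.

Lemma dist_refl x : d x x = 0.
Proof. apply Hm. reflexivity. Qed.

Lemma dist_sym x y : d x y = d y x.
Proof. apply Hm. Qed.

Lemma dist_triangle x y z : d x z <= d x y + d y z.
Proof. apply Hm. Qed.

Lemma ball_open c e : is_open d (fun y => d c y < e).
Proof.
  intros x Hx. exists (e - d c x). split; [lra|].
  intros y Hy. pose proof (dist_triangle c x y). lra.
Qed.

Lemma disjointify_open Cs :
  (forall y, exists rho, 0 < rho /\
     forall w, d y w < rho -> forall C, In C Cs -> (C y <-> C w)) ->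
  forall V, In V (disjointify Cs) -> is_open d V.
Proof.
  intros Hloc V HV. apply in_disjointify in HV as (j & Hj & ->).
  intros y [Hyj Hbefore]. destruct (Hloc y) as (rho & Hrho & Hconst).
  exists rho. split; [exact Hrho|]. intros w Hw. split.
  - apply (Hconst w Hw); [apply nth_In; exact Hj | exact Hyj].
  - intros i Hi Hwi. apply (Hbefore i Hi).
    apply (Hconst w Hw); [apply nth_In; lia | exact Hwi].
Qed.

Hypothesis Hc : is_compact d.

Lemma lebesgue_number cover :
  (forall U, In U cover -> is_open d U) -> (forall x, exists U, In U cover /\ U x) ->
  exists lam, 0 < lam /\ forall x, exists U, In U cover /\ forall y, d x y < lam -> U y.
Proof.
  intros Hopen Hcov.
  set (I := {p : X * R | 0 < snd p /\
              exists U, In U cover /\ forall y, d (fst p) y < snd p -> U y}).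
  destruct (@Hc I (fun i y => d (fst (proj1_sig i)) y < snd (proj1_sig i) / 2)) as [l Hl].
  - intros i. apply ball_open.
  - intros x. destruct (Hcov x) as (U & HU & Ux).
    destruct (Hopen U HU x Ux) as (r & Hr & Hball).
    assert (Hp : 0 < snd (x, r) /\
              exists U, In U cover /\ forall y, d (fst (x, r)) y < snd (x, r) -> U y)
      by (split; [exact Hr | exists U; auto]).
    exists (exist _ (x, r) Hp). simpl. rewrite dist_refl. lra.
  - set (radius := fun i : I => snd (proj1_sig i) / 2).
    exists (MinRlist (map radius l)). split.
    + apply MinRlist_P2. intros y Hy. apply in_map_iff in Hy as (i & <- & _).
      destruct i as [p Hp]. unfold radius. simpl. destruct Hp as [Hr _]. lra.
    + intros x. destruct (Hl x) as (i & Hi & Hx).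
      pose proof (MinRlist_P1 (map radius l) (radius i) (in_map radius l i Hi)) as Hle.
      destruct i as [[c r] [Hr (U & HU & Hball)]]. unfold radius in *. simpl in *.
      exists U. split; [exact HU|]. intros y Hy. apply Hball.
      pose proof (dist_triangle c x y). lra.
Qed.

Lemma compact_close_pair (u : nat -> X) eps :
  0 < eps -> exists i j, (i < j)%nat /\ d (u i) (u j) < eps.
Proof.
  intros Heps.
  destruct (@Hc X (fun c y => d c y < eps / 2)) as [l Hl].
  - intros c. apply ball_open.
  - intros y. exists y. rewrite dist_refl. lra.
  - destruct (@Permutation_pigeonhole_rel _ _ (fun j c => d c (u j) < eps / 2)
                (seq 0 (S (length l))) l) as (i & j & l' & Hperm & c & _ & Hi & Hj).
    + apply Forall_forall. intros j _. apply Exists_exists.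
      destruct (Hl (u j)) as (c & Hcl & Hc'). exists c. auto.
    + rewrite length_seq. lia.
    + assert (Hij : i <> j).
      { pose proof (Permutation_NoDup Hperm (seq_NoDup _ _)) as Hnd.
        inversion Hnd as [|? ? Hnotin]. intros ->. apply Hnotin. left. reflexivity. }
      assert (Hdij : d (u i) (u j) < eps).
      { pose proof (dist_triangle (u i) c (u j)). rewrite (dist_sym (u i) c) in H. lra. }
      destruct (Nat.lt_total i j) as [Hlt|[Heq|Hlt]].
      * exists i, j. auto.
      * contradiction.
      * exists j, i. rewrite dist_sym. auto.
Qed.

End Metric.

Section ClassConjugacy.
Variables (A : Type) (F : A -> A) (E : A -> A -> Prop).
Context {HE : Equivalence E}.
Hypothesis HF : forall x y, E (F x) (F y) <-> E x y.

Definition is_min_period (z : A) (p : nat) : Prop :=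
  (1 <= p)%nat /\ E (Nat.iter p F z) z /\
  forall q, (1 <= q)%nat -> (q < p)%nat -> ~ E (Nat.iter q F z) z.

Lemma iter_equiv_iff n x y : E (Nat.iter n F x) (Nat.iter n F y) <-> E x y.
Proof.
  induction n as [|n IH]; [reflexivity|]. simpl. rewrite HF. exact IH.
Qed.

Lemma iter_period_mult z p n : E (Nat.iter p F z) z -> E (Nat.iter (n * p) F z) z.
Proof.
  intros Hp. induction n as [|n IH]; [reflexivity|].
  replace (S n * p)%nat with (n * p + p)%nat by lia. rewrite Nat.iter_add.
  etransitivity; [|exact IH]. apply iter_equiv_iff. exact Hp.
Qed.

Lemma min_period_exists z :
  (exists p, (1 <= p)%nat /\ E (Nat.iter p F z) z) -> exists p, is_min_period z p.
Proof.
  intros Hex. destruct (ex_least_nat Hex) as (p & [Hp1 Hp] & Hleast).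
  exists p. repeat split; try assumption.
  intros q Hq1 Hqp Hq. exact (Hleast q Hqp (conj Hq1 Hq)).
Qed.

Lemma min_period_index_unique z p i i' :
  is_min_period z p -> (i < p)%nat -> (i' < p)%nat ->
  E (Nat.iter i F z) (Nat.iter i' F z) -> i = i'.
Proof.
  intros (_ & _ & Hmin) Hi Hi'.
  assert (Hlt : forall a a', (a < a')%nat -> (a' < p)%nat ->
                  ~ E (Nat.iter a F z) (Nat.iter a' F z)).
  { intros a a' Ha Ha' Hzz. apply (Hmin (a' - a)%nat); [lia|lia|].
    replace a' with (a + (a' - a))%nat in Hzz by lia.
    rewrite Nat.iter_add, iter_equiv_iff in Hzz. symmetry. exact Hzz. }
  intros Hii'. destruct (Nat.lt_total i i') as [H|[H|H]].
  - exfalso. exact (Hlt i i' H Hi' Hii').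
  - exact H.
  - exfalso. apply (Hlt i' i H Hi). symmetry. exact Hii'.
Qed.

Variables (per : A -> nat) (Q : A -> A).
Hypothesis Hper : forall z, is_min_period z (per z).
Hypothesis HQ : forall z, Nat.iter (per z) F (Q z) = Q z.

Definition class_orbit (y z : A) : Prop := exists i, E z (Nat.iter i F y).

Lemma class_orbit_eq y y' j : E y' (Nat.iter j F y) -> class_orbit y' = class_orbit y.
Proof.
  intros Hy'. apply functional_extensionality. intros z. apply propositional_extensionality.
  split.
  - intros (i & Hi). exists (i + j)%nat. rewrite Nat.iter_add.
    etransitivity; [exact Hi|]. apply iter_equiv_iff. exact Hy'.
  - intros (i & Hi). destruct (Hper y) as (Hp1 & Hp & _).
    (* with p = per y, another j*(p-1) steps from y' ~ F^j y lead back to the class of y *)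
    exists (i + j * (per y - 1))%nat.
    etransitivity; [exact Hi|]. rewrite Nat.iter_add. apply iter_equiv_iff. symmetry.
    transitivity (Nat.iter (j * (per y - 1)) F (Nat.iter j F y)).
    { apply iter_equiv_iff. exact Hy'. }
    rewrite <- Nat.iter_add. replace (j * (per y - 1) + j)%nat with (j * per y)%nat by nia.
    apply iter_period_mult. exact Hp.
Qed.

Definition orbit_base (y : A) : A := epsilon (inhabits y) (class_orbit y).

Lemma orbit_base_eq y y' j : E y' (Nat.iter j F y) -> orbit_base y' = orbit_base y.
Proof.
  intros Hy'. unfold orbit_base. rewrite (class_orbit_eq Hy').
  apply epsilon_inh_irrelevance. exists y, 0%nat. reflexivity.
Qed.

Lemma class_orbit_base y : exists i, E y (Nat.iter i F (orbit_base y)).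
Proof.
  assert (Hbase : class_orbit y (orbit_base y)).
  { unfold orbit_base. apply epsilon_spec. exists y, 0%nat. reflexivity. }
  destruct Hbase as (j & Hj).
  assert (Hy : class_orbit y y) by (exists 0%nat; reflexivity).
  rewrite <- (class_orbit_eq Hj) in Hy. exact Hy.
Qed.

Lemma orbit_index_exists y :
  exists i, (i < per (orbit_base y))%nat /\ E y (Nat.iter i F (orbit_base y)).
Proof.
  destruct (class_orbit_base y) as (i & Hi).
  set (b := orbit_base y) in *. destruct (Hper b) as (Hp1 & Hp & _).
  exists (i mod per b)%nat. split; [apply Nat.mod_upper_bound; lia|].
  etransitivity; [exact Hi|].
  replace (Nat.iter i F b) with (Nat.iter (i mod per b) F (Nat.iter (i / per b * per b) F b))
    by (rewrite <- Nat.iter_add; f_equal; pose proof (Nat.div_mod_eq i (per b)); lia).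
  apply iter_equiv_iff. apply iter_period_mult. exact Hp.
Qed.

Lemma class_conjugacy :
  exists h : A -> A,
    (forall y y', E y y' -> h y = h y') /\
    (forall y y', E y' (F y) -> h y' = F (h y)) /\
    (forall y, exists z i, (i < per z)%nat /\ E y (Nat.iter i F z) /\
                           h y = Nat.iter i F (Q z)).
Proof.
  destruct (choice _ orbit_index_exists) as [ind Hind].
  exists (fun y => Nat.iter (ind y) F (Q (orbit_base y))). split; [|split].
  - intros y y' Hyy'.
    assert (Hb : orbit_base y' = orbit_base y)
      by (apply (orbit_base_eq (j := 0)); symmetry; exact Hyy').
    destruct (Hind y) as [Hi Hyi]. destruct (Hind y') as [Hi' Hyi'].
    rewrite Hb in Hi', Hyi' |- *.
    rewrite (min_period_index_unique (Hper _) Hi Hi'); [reflexivity|].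
    etransitivity; [symmetry; exact Hyi|]. etransitivity; [exact Hyy'|exact Hyi'].
  - intros y y' Hy'.
    assert (Hb : orbit_base y' = orbit_base y) by (apply (orbit_base_eq (j := 1)); exact Hy').
    destruct (Hind y) as [Hi Hyi]. destruct (Hind y') as [Hi' Hyi'].
    rewrite Hb in Hi', Hyi' |- *. set (b := orbit_base y) in *.
    assert (Hnext : E y' (Nat.iter (S (ind y)) F b))
      by (etransitivity; [exact Hy'|]; apply HF; exact Hyi).
    destruct (Hper b) as (Hp1 & Hp & _).
    destruct (Nat.eq_dec (S (ind y)) (per b)) as [Hwrap|Hwrap].
    + assert (Hind0 : ind y' = 0%nat).
      { apply (min_period_index_unique (Hper b) Hi' Hp1).
        etransitivity; [symmetry; exact Hyi'|]. rewrite Hwrap in Hnext.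
        etransitivity; [exact Hnext|exact Hp]. }
      rewrite Hind0. simpl. rewrite <- (HQ b) at 1. rewrite <- Hwrap. reflexivity.
    + assert (Hsucc : ind y' = S (ind y)).
      { apply (min_period_index_unique (Hper b) Hi'); [lia|].
        etransitivity; [symmetry; exact Hyi'|exact Hnext]. }
      rewrite Hsucc. reflexivity.
  - intros y. exists (orbit_base y), (ind y). destruct (Hind y) as [Hi Hyi]. auto.
Qed.

End ClassConjugacy.

(* 0, 1, ..., k, ..., 1, 0, 0, ...: truncated subtraction keeps it at 0 from time 2k on. *)
Definition tent (k t : nat) : nat := if Nat.leb t k then t else (2 * k - t)%nat.

Lemma tent_le k t : (t <= k)%nat -> tent k t = t.
Proof. intros H. unfold tent. destruct (Nat.leb_spec t k); lia. Qed.

Lemma tent_large k t : (2 * k <= t)%nat -> tent k t = 0%nat.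
Proof. intros H. unfold tent. destruct (Nat.leb_spec t k); lia. Qed.

Lemma tent_step k t :
  tent k (S t) = tent k t \/
  (tent k (S t) = S (tent k t) /\ (tent k t < k)%nat) \/
  (tent k t = S (tent k (S t)) /\ (tent k (S t) < k)%nat).
Proof. unfold tent. destruct (Nat.leb_spec (S t) k), (Nat.leb_spec t k); lia. Qed.

Section Dynamics.
Variables (X : Type) (d : X -> X -> R).
Hypothesis Hm : is_metric d.
Variable f : homeo d.

Local Notation iterf n := (Nat.iter n (hmap f)).

Lemma iter_hinv_hmap n x : Nat.iter n (hinv f) (iterf n x) = x.
Proof.
  induction n as [|n IH]; [reflexivity|].
  rewrite Nat.iter_succ_r. simpl. rewrite hinv_l. exact IH.
Qed.

Lemma ziter_of_nat n x : ziter f (Z.of_nat n) x = iterf n x.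
Proof. destruct n; [reflexivity|]. simpl. rewrite SuccNat2Pos.id_succ. reflexivity. Qed.

Lemma ziter_opp_of_nat n x : ziter f (- Z.of_nat n) x = Nat.iter n (hinv f) x.
Proof. destruct n; [reflexivity|]. simpl. rewrite SuccNat2Pos.id_succ. reflexivity. Qed.

Lemma ziter_opp_iter n x : ziter f (- Z.of_nat n) (iterf n x) = x.
Proof. rewrite ziter_opp_of_nat. apply iter_hinv_hmap. Qed.

Lemma ziter_succ i x : ziter f (Z.succ i) x = ziter f i (hmap f x).
Proof.
  destruct (Z_le_gt_dec 0 i) as [Hi|Hi].
  - rewrite <- (Z2Nat.id i Hi), <- Nat2Z.inj_succ, !ziter_of_nat. apply Nat.iter_succ_r.
  - replace i with (- Z.of_nat (S (Z.to_nat (- i - 1))))%Z by lia.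
    replace (Z.succ (- Z.of_nat (S (Z.to_nat (- i - 1)))))
      with (- Z.of_nat (Z.to_nat (- i - 1)))%Z by lia.
    rewrite !ziter_opp_of_nat, Nat.iter_succ_r, hinv_l. reflexivity.
Qed.

Lemma ziter_pred i x : ziter f (Z.pred i) x = ziter f i (hinv f x).
Proof. rewrite <- (Z.succ_pred i) at 2. rewrite ziter_succ, hinv_r. reflexivity. Qed.

Definition orbit_close (r : R) (x y : X) : Prop :=
  forall i : Z, d (ziter f i x) (ziter f i y) <= r.

Definition orbit_chain (r : R) : X -> X -> Prop := clos_refl_sym_trans X (orbit_close r).

#[local] Instance orbit_chain_equivalence r : Equivalence (orbit_chain r).
Proof.
  split; intros ?; [apply rst_refl | intros ?; apply rst_sym | intros ? ?; apply rst_trans].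
Qed.

Lemma orbit_close_iter r x y n : orbit_close r x y -> d (iterf n x) (iterf n y) <= r.
Proof. intros H. rewrite <- !ziter_of_nat. apply H. Qed.

Lemma orbit_chain_hmap_iff r x y : orbit_chain r (hmap f x) (hmap f y) <-> orbit_chain r x y.
Proof.
  assert (Hmap : forall g : X -> X, (forall a b, orbit_close r a b -> orbit_close r (g a) (g b)) ->
                 forall a b, orbit_chain r a b -> orbit_chain r (g a) (g b)).
  { intros g Hg a b Hab. induction Hab; [apply rst_step; auto | reflexivity
                                         | symmetry; assumption | etransitivity; eassumption]. }
  split.
  - intros H. rewrite <- (hinv_l f x), <- (hinv_l f y). revert H. apply Hmap.
    intros a b Hab i. rewrite <- !ziter_pred. apply Hab.
  - apply Hmap. intros a b Hab i. rewrite <- !ziter_succ. apply Hab.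
Qed.

Lemma orbit_chain_path r x y : orbit_chain r x y ->
  exists k (z : nat -> X), z 0%nat = x /\ z k = y /\
    forall j, (j < k)%nat -> orbit_close r (z j) (z (S j)) \/ orbit_close r (z (S j)) (z j).
Proof.
  intros Hxy. apply clos_rst_rstn1 in Hxy.
  induction Hxy as [|y w Hyw Hxy (k & z & Hz0 & Hzk & Hsteps)].
  - exists 0%nat, (fun _ => x). repeat split. intros j Hj. lia.
  - exists (S k), (fun j => if Nat.eqb j (S k) then w else z j). repeat split.
    + exact Hz0.
    + rewrite Nat.eqb_refl. reflexivity.
    + intros j Hj. destruct (Nat.eqb_spec j (S k)); [lia|].
      destruct (Nat.eqb_spec (S j) (S k)) as [Hlast|].
      * injection Hlast as ->. rewrite Hzk. exact Hyw.
      * apply Hsteps. lia.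
Qed.

(* Out along the chain z_0, ..., z_k and back, then wait for the orbit of z_0 to return. *)
Definition return_cycle (z : nat -> X) (k m t : nat) : X :=
  if Nat.eqb t m then z 0%nat else iterf t (z (tent k t)).

Lemma return_cycle_below z k m t : (t < m)%nat -> return_cycle z k m t = iterf t (z (tent k t)).
Proof. intros Ht. unfold return_cycle. destruct (Nat.eqb_spec t m); [lia|reflexivity]. Qed.

Lemma return_cycle_is_delta_cycle delta z k m :
  (forall j, (j < k)%nat ->
     orbit_close delta (z j) (z (S j)) \/ orbit_close delta (z (S j)) (z j)) ->
  (2 * k < m)%nat -> d (iterf m (z 0%nat)) (z 0%nat) <= delta ->
  is_delta_cycle f delta (return_cycle z k m) m.
Proof.
  intros Hsteps Hkm Hret.
  assert (Hdelta : 0 <= delta) by (pose proof (dist_nonneg Hm (iterf m (z 0%nat)) (z 0%nat)); lra).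
  split; [lia|split].
  - intros t Ht. rewrite return_cycle_below by exact Ht.
    change (hmap f (iterf t (z (tent k t)))) with (iterf (S t) (z (tent k t))).
    destruct (Nat.eq_dec (S t) m) as [Hlast|Hlast].
    + unfold return_cycle. rewrite Hlast, Nat.eqb_refl, tent_large by lia. exact Hret.
    + rewrite return_cycle_below by lia.
      destruct (tent_step k t) as [Heq|[[Heq Hlt]|[Heq Hlt]]].
      * rewrite Heq, dist_refl by exact Hm. exact Hdelta.
      * rewrite Heq. destruct (Hsteps _ Hlt) as [H|H];
          [|rewrite dist_sym by exact Hm]; apply orbit_close_iter; exact H.
      * rewrite Heq. destruct (Hsteps _ Hlt) as [H|H];
          [rewrite dist_sym by exact Hm|]; apply orbit_close_iter; exact H.
  - unfold return_cycle. rewrite Nat.eqb_refl. destruct (Nat.eqb_spec 0 m); [lia|reflexivity].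
Qed.

Lemma shadow_almost_periodic eps delta z p :
  (forall x m, is_delta_cycle f delta x m ->
     exists q, iterf m q = q /\ forall i, (i <= m)%nat -> d (x i) (iterf i q) <= eps) ->
  (1 <= p)%nat -> d (iterf p z) z <= delta ->
  exists q, iterf p q = q /\ forall i, (i < p)%nat -> d (iterf i z) (iterf i q) <= eps.
Proof.
  intros Hsh Hp Hret.
  destruct (Hsh _ _ (@return_cycle_is_delta_cycle delta (fun _ => z) 0 p
                       (fun j Hj => ltac:(lia)) ltac:(lia) Hret)) as (q & Hq & Hshadow).
  exists q. split; [exact Hq|]. intros i Hi.
  specialize (Hshadow i (Nat.lt_le_incl _ _ Hi)). rewrite return_cycle_below in Hshadow by exact Hi.
  exact Hshadow.
Qed.

Hypotheses (Hc : is_compact d) (He : equicontinuous f).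

Lemma recurrence x N r : 0 < r -> exists m, (N < m)%nat /\ d (iterf m x) x <= r.
Proof.
  intros Hr. destruct (@He r Hr) as (rho & Hrho & Hclose).
  destruct (compact_close_pair Hm Hc (fun j => iterf (j * S N) x) Hrho) as (i & j & Hij & Hd).
  exists ((j - i) * S N)%nat. split; [nia|].
  specialize (Hclose _ _ (Rlt_le _ _ Hd) (- Z.of_nat (i * S N))%Z).
  replace (j * S N)%nat with (i * S N + (j - i) * S N)%nat in Hclose by nia.
  rewrite Nat.iter_add, !ziter_opp_iter in Hclose.
  rewrite dist_sym by exact Hm. exact Hclose.
Qed.

Hypothesis Hs : strict_periodic_shadowing f.

(* Shadow the cycle that runs along the chain from x to y and back; the shadowing periodic
   point is then close both to x (time 0) and to y (time k, pulled back by equicontinuity). *)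
Lemma orbit_chain_small eta : 0 < eta ->
  exists r, 0 < r /\ forall x y, orbit_chain r x y -> d x y <= eta.
Proof.
  intros Heta.
  destruct (@He (eta / 2)) as (rho & Hrho & Hclose); [lra|].
  set (e := Rmin rho (eta / 2)).
  assert (He_rho : e <= rho) by apply Rmin_l.
  assert (He_eta : e <= eta / 2) by apply Rmin_r.
  destruct (@Hs e) as (r & Hr & Hsh); [apply Rmin_glb_lt; lra|].
  exists r. split; [exact Hr|].
  intros x y Hxy. destruct (orbit_chain_path Hxy) as (k & z & <- & <- & Hsteps).
  destruct (recurrence (z 0%nat) (2 * k) Hr) as (m & Hm_k & Hret).
  destruct (Hsh _ _ (return_cycle_is_delta_cycle Hsteps Hm_k Hret)) as (p & _ & Hshadow).
  assert (H0 := Hshadow 0%nat ltac:(lia)). assert (Hk := Hshadow k ltac:(lia)).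
  rewrite return_cycle_below, tent_le in H0, Hk by lia.
  specialize (Hclose _ _ (Rle_trans _ _ _ Hk He_rho) (- Z.of_nat k)%Z).
  rewrite !ziter_opp_iter in Hclose.
  pose proof (dist_triangle Hm (z 0%nat) p (z k)). rewrite (dist_sym Hm p) in H.
  simpl in H0. lra.
Qed.

Lemma covering_dim_le0_of_shadowing : covering_dim_le0 d.
Proof.
  intros cover Hopen Hcover.
  destruct (lebesgue_number Hm Hc Hopen Hcover) as (lam & Hlam & Hleb).
  destruct (orbit_chain_small (eta := lam / 2)) as (r & Hr & Hsmall); [lra|].
  destruct (@He r Hr) as (rho & Hrho & Hclose).
  assert (Hnear : forall y w, d y w < rho -> orbit_chain r y w)
    by (intros y w Hyw; apply rst_step; exact (Hclose _ _ (Rlt_le _ _ Hyw))).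
  destruct (@Hc X (orbit_chain r)) as [l Hl].
  - intros x y Hxy. exists rho. split; [exact Hrho|].
    intros w Hw. etransitivity; [exact Hxy | exact (Hnear _ _ Hw)].
  - intros x. exists x. reflexivity.
  - exists (disjointify (map (orbit_chain r) l)). split; [|split; [|split]].
    + apply disjointify_open. intros y. exists rho. split; [exact Hrho|].
      intros w Hw C HC. apply in_map_iff in HC as (c & <- & _).
      pose proof (Hnear _ _ Hw). split; intros Hc'; [|symmetry in H]; etransitivity; eassumption.
    + apply disjointify_cover. intros x. destruct (Hl x) as (c & Hcl & Hcx).
      exists (orbit_chain r c). split; [apply in_map; exact Hcl | exact Hcx].
    + intros V HV. destruct (disjointify_refines HV) as (C & HC & HVC).
      apply in_map_iff in HC as (c & <- & _).
      destruct (Hleb c) as (U & HU & Hball). exists U. split; [exact HU|].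
      intros x Hx. apply Hball. pose proof (Hsmall _ _ (HVC x Hx)). lra.
    + apply disjointify_disjoint.
Qed.

Lemma topologically_stable_of_shadowing : inhabited X -> topologically_stable f.
Proof.
  intros Hne eps Heps.
  destruct (@Hs (eps / 4)) as (ds & Hds & Hsh); [lra|].
  destruct (orbit_chain_small (eta := Rmin ds (eps / 4))) as (r & Hr & Hsmall);
    [apply Rmin_glb_lt; lra|].
  destruct (@He r Hr) as (rho & Hrho & Hclose).
  assert (Hnear : forall y w, d y w <= rho -> orbit_chain r y w)
    by (intros y w Hyw; apply rst_step; exact (Hclose _ _ Hyw)).
  exists rho. split; [exact Hrho|].
  intros g (s1 & s2 & [Hs1 _] & _ & Hmax).
  assert (Hgf : forall y, orbit_chain r (hmap g y) (hmap f y)).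
  { intros y. symmetry. apply Hnear.
    assert (d (hmap f y) (hmap g y) <= s1) by (apply Hs1; exists y; reflexivity).
    pose proof (Rmax_l s1 s2). lra. }
  assert (Hrec : forall y, exists p, (1 <= p)%nat /\ orbit_chain r (iterf p y) y).
  { intros y. destruct (recurrence y 0 Hrho) as (p & Hp & Hret). exists p. split; [lia|].
    apply Hnear. exact Hret. }
  destruct (choice _ (fun y => min_period_exists (Hrec y)))
    as [per Hper].
  assert (Hshadow : forall z, exists q, iterf (per z) q = q /\
                      forall i, (i < per z)%nat -> d (iterf i z) (iterf i q) <= eps / 4).
  { intros z. destruct (Hper z) as (Hp1 & Hpz & _). apply (shadow_almost_periodic Hsh Hp1).
    pose proof (Hsmall _ _ Hpz). pose proof (Rmin_l ds (eps / 4)). lra. }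
  destruct (choice _ Hshadow) as [Q HQ].
  destruct (class_conjugacy (orbit_chain_hmap_iff r) Hper (fun z => proj1 (HQ z)))
    as (h & Hclass & Hconj & Hh).
  exists h. split; [|split].
  - intros x e He0. exists rho. split; [exact Hrho|]. intros y Hxy.
    rewrite (Hclass x y) by (apply Hnear; lra). rewrite dist_refl by exact Hm. exact He0.
  - apply (dC0_lt_of_bound (b := eps / 2)); [exact Hne| |lra].
    intros y. destruct (Hh y) as (z & i & Hi & Hyz & ->).
    pose proof (proj2 (HQ z) i Hi). pose proof (Hsmall _ _ Hyz). pose proof (Rmin_r ds (eps / 4)).
    pose proof (dist_triangle Hm (iterf i (Q z)) (iterf i z) y).
    rewrite (dist_sym Hm (iterf i (Q z))), (dist_sym Hm (iterf i z)) in *. lra.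
  - intros y. apply Hconj. apply Hgf.
Qed.

End Dynamics.

Theorem theorem1p2 (X : Type) (d : X -> X -> R)
  (Hmetric : is_metric d) (Hcompact : is_compact d) (Hne : inhabited X)
  (f : homeo d) (Hequi : equicontinuous f) :
  strict_periodic_shadowing f -> topologically_stable f /\ dim_eq0 d.
Proof.
  intros Hs. split; [|split].
  - exact (topologically_stable_of_shadowing Hmetric Hcompact Hequi Hs Hne).
  - exact (covering_dim_le0_of_shadowing Hmetric Hcompact Hequi Hs).
  - exact Hne.
Qed.
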